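(* For $n\ge2$, there is a well-defined surjective homomorphism $\psi_P:TVP_n\to A_n$ with $\psi_P(\lambda_{kl})=e$ for all $1\le k\ne l\le n$ and $\psi_P(\gamma_j)=\gamma_j$ for $1\le j\le n$, which restricts to the identity on $A_n$. Consequently, with $PL_n=\ker\psi_P$, one has $TVP_n=PL_n\rtimes A_n$.
   Context: For $n\ge 2$, the twisted virtual braid group $TVB_n$ is the group with generators $\sigma_1,\dots,\sigma_{n-1}$, $\rho_1,\dots,\rho_{n-1}$, $\gamma_1,\dots,\gamma_n$ and defining relations: $\sigma_i\sigma_{i+1}\sigma_i=\sigma_{i+1}\sigma_i\sigma_{i+1}$ ($1\le i\le n-2$); $\sigma_i\sigma_j=\sigma_j\sigma_i$ ($|i-j|\ge 2$); $\rho_i^2=1$; $\rho_i\rho_j=\rho_j\rho_i$ ($|i-j|\ge2$); $\rho_i\rho_{i+1}\rho_i=\rho_{i+1}\rho_i\rho_{i+1}$ ($1\le i\le n-2$); $\sigma_i\rho_j=\rho_j\sigma_i$ ($|i-j|\ge 2$); $\rho_i\rho_{i+1}\sigma_i=\sigma_{i+1}\rho_i\rho_{i+1}$ ($1\le i\le n-2$); $\gamma_i^2=1$ and $\gamma_i\gamma_j=\gamma_j\gamma_i$ (all $i,j$); $\gamma_j\rho_i=\rho_i\gamma_j$ and $\gamma_j\sigma_i=\sigma_i\gamma_j$ for $j\notin\{i,i+1\}$; $\rho_i\gamma_i=\gamma_{i+1}\rho_i$ ($1\le i\le n-1$); $\rho_i\sigma_i\rho_i=\gamma_{i+1}\gamma_i\sigma_i\gamma_i\gamma_{i+1}$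 ($1\le i\le n-1$). $\varphi_P:TVB_n\to S_n$ is the homomorphism with $\sigma_i\mapsto(i,i+1)$, $\rho_i\mapsto(i,i+1)$, $\gamma_j\mapsto e$, and $TVP_n=\ker\varphi_P$. $A_n=\langle\gamma_1,\dots,\gamma_n\rangle\le TVP_n$. In $TVB_n$ define $\lambda_{i,i+1}=\rho_i\sigma_i^{-1}$, $\lambda_{i+1,i}=\rho_i\lambda_{i,i+1}\rho_i$ ($1\le i\le n-1$), and for $1\le i<j-1\le n-1$: $\lambda_{ij}=\rho_{j-1}\cdots\rho_{i+1}\lambda_{i,i+1}\rho_{i+1}\cdots\rho_{j-1}$, $\lambda_{ji}=\rho_{j-1}\cdots\rho_{i+1}\lambda_{i+1,i}\rho_{i+1}\cdots\rho_{j-1}$. The elements $\lambda_{kl}$ and $\gamma_j$ generate $TVP_n$. *)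

(* The twisted virtual braid group TVB_n is
   constructed honestly as a finitely presented group: words in the
   generators and their inverses, modulo the congruence generated by free
   cancellation and the defining relations. Indices are 1-based as in the paper. *)
From mathcomp Require Import all_boot.
Set Implicit Arguments. Unset Strict Implicit. Unset Printing Implicit Defensive.

Inductive gen : Type :=
| Sig of nat
| Rho of nat
| Gam of nat.

(* a letter is a generator together with a flag: true = inverse letter *)
Definition letter := (gen * bool)%type.
Definition word := seq letter.

Definition P (g : gen) : letter := (g, false).
Definition Inv (g : gen) : letter := (g, true).
Definition flip (x : letter) : letter := (x.1, ~~ x.2).
Definition winv (w : word) : word := rev (map flip w).

Definition valid_gen (n : nat) (g : gen) : bool :=
  match g with
  | Sig i | Rho i => (0 < i) && (i < n)
  | Gam j => (0 < j) && (j <= n)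
  end.
Definition valid (n : nat) (w : word) : bool := all (fun x => valid_gen n x.1) w.

Definition far (i j : nat) : bool := (i + 2 <= j) || (j + 2 <= i).

Inductive rel (n : nat) : word -> word -> Prop :=
| r_sbraid i : 0 < i -> i + 1 <= n - 1 ->
    rel n [:: P (Sig i); P (Sig i.+1); P (Sig i)] [:: P (Sig i.+1); P (Sig i); P (Sig i.+1)]
| r_scomm i j : 0 < i < n -> 0 < j < n -> far i j ->
    rel n [:: P (Sig i); P (Sig j)] [:: P (Sig j); P (Sig i)]
| r_rsq i : 0 < i < n -> rel n [:: P (Rho i); P (Rho i)] [::]
| r_rcomm i j : 0 < i < n -> 0 < j < n -> far i j ->
    rel n [:: P (Rho i); P (Rho j)] [:: P (Rho j); P (Rho i)]
| r_rbraid i : 0 < i -> i + 1 <= n - 1 ->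
    rel n [:: P (Rho i); P (Rho i.+1); P (Rho i)] [:: P (Rho i.+1); P (Rho i); P (Rho i.+1)]
| r_srcomm i j : 0 < i < n -> 0 < j < n -> far i j ->
    rel n [:: P (Sig i); P (Rho j)] [:: P (Rho j); P (Sig i)]
| r_mixed i : 0 < i -> i + 1 <= n - 1 ->
    rel n [:: P (Rho i); P (Rho i.+1); P (Sig i)] [:: P (Sig i.+1); P (Rho i); P (Rho i.+1)]
| r_gsq j : 0 < j <= n -> rel n [:: P (Gam j); P (Gam j)] [::]
| r_gcomm i j : 0 < i <= n -> 0 < j <= n ->
    rel n [:: P (Gam i); P (Gam j)] [:: P (Gam j); P (Gam i)]
| r_grcomm i j : 0 < i < n -> 0 < j <= n -> j != i -> j != i.+1 ->
    rel n [:: P (Gam j); P (Rho i)] [:: P (Rho i); P (Gam j)]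
| r_gscomm i j : 0 < i < n -> 0 < j <= n -> j != i -> j != i.+1 ->
    rel n [:: P (Gam j); P (Sig i)] [:: P (Sig i); P (Gam j)]
| r_rg i : 0 < i < n ->
    rel n [:: P (Rho i); P (Gam i)] [:: P (Gam i.+1); P (Rho i)]
| r_rsr i : 0 < i < n ->
    rel n [:: P (Rho i); P (Sig i); P (Rho i)]
          [:: P (Gam i.+1); P (Gam i); P (Sig i); P (Gam i); P (Gam i.+1)].

Inductive tvb_eq (n : nat) : word -> word -> Prop :=
| te_refl w : tvb_eq n w w
| te_sym w1 w2 : tvb_eq n w1 w2 -> tvb_eq n w2 w1
| te_trans w1 w2 w3 : tvb_eq n w1 w2 -> tvb_eq n w2 w3 -> tvb_eq n w1 w3
| te_free u v x : tvb_eq n (u ++ x :: flip x :: v) (u ++ v)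
| te_rel u v l r : rel n l r -> tvb_eq n (u ++ l ++ v) (u ++ r ++ v).

(* phi_P : TVB_n -> S_n, sigma_i, rho_i |-> (i, i+1), gamma_j |-> e;
   permutations of {1..n} are represented as functions on nat. *)
Definition swap (i k : nat) : nat :=
  if k == i then i.+1 else if k == i.+1 then i else k.
Definition gen_perm (g : gen) : nat -> nat :=
  match g with
  | Sig i | Rho i => swap i
  | Gam _ => id
  end.
Definition phiP (w : word) : nat -> nat :=
  foldr (fun x f => gen_perm x.1 \o f) id w.

Definition in_TVP (n : nat) (w : word) : Prop :=
  valid n w /\ forall k, phiP w k = k.

Definition is_gam (x : letter) : bool :=
  match x.1 with Gam _ => true | _ => false end.

Definition in_A (n : nat) (w : word) : Prop :=
  valid n w /\ exists a, [/\ valid n a, all is_gam a & tvb_eq n w a].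

Definition rhoseq (i j : nat) : word :=
  map (fun m => P (Rho m)) (rev (iota i.+1 (j - i.+1))).

Definition lam (k l : nat) : word :=
  if k < l then rhoseq k l ++ [:: P (Rho k); Inv (Sig k)] ++ rev (rhoseq k l)
  else rhoseq l k ++ [:: P (Rho l); P (Rho l); Inv (Sig l); P (Rho l)]
         ++ rev (rhoseq l k).

From Pilot Require Import Defs.
From mathcomp Require Import all_boot zify.

Set Implicit Arguments.
Unset Strict Implicit.
Unset Printing Implicit Defensive.

(** The generators act on [nat * bool], positions carrying a bit: [sigma_i]
  and [rho_i] swap positions [i] and [i+1], [gamma_j] flips the bit at
  position [j], and every defining relation of TVB_n holds in this action.  An
  element [w] of TVP_n fixes all positions, so it acts by
  [(k, b) |-> (k, b + twist w k)], and on TVP_n the map [w |-> twist w] is a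
  homomorphism to (Z/2)^n.  Put [psi_P w := prod_{twist w k = 1} gamma_k].  As
  the [gamma_j] commute and are involutions, every word in the [gamma_j] equals
  the [psi_P] of itself, so [psi_P] is the identity on A_n; [lambda_kl] is a
  conjugate of [rho sigma^-1] or [rho rho sigma^-1 rho], hence acts trivially
  and lies in the kernel.  The splitting is [w = (w psi_P(w)^-1) psi_P(w)]. *)

(* Innermost comparisons first, so that each case split simplifies the
   enclosing [if]s; contradictory branches are pruned at once. *)
Ltac case_nat_eqs :=
  repeat match goal with
  | |- context [?a == ?b] =>
      lazymatch constr:((a, b)) with context [if _ then _ else _] => fail | _ =>
      case: (a =P b) => ? /=; try (exfalso; lia) end
  end.

Lemma swapK i : involutive (swap i).
Proof. by move=> k; rewrite /swap; case_nat_eqs; lia. Qed.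

Lemma swap_eq i k j : (swap i k == j) = (k == swap i j).
Proof. by rewrite -{1}(swapK i j) (inj_eq (can_inj (swapK i))). Qed.

Lemma swap_l i : swap i i = i.+1.
Proof. by rewrite /swap eqxx. Qed.

Lemma swap_r i : swap i i.+1 = i.
Proof. by rewrite /swap gtn_eqF // eqxx. Qed.

Lemma swap_id i j : j != i -> j != i.+1 -> swap i j = j.
Proof. by rewrite /swap => /negPf-> /negPf->. Qed.

Lemma swap_comm i j k : far i j -> swap i (swap j k) = swap j (swap i k).
Proof. by rewrite /far /swap => ?; case_nat_eqs; lia. Qed.

Lemma swap_braid i k :
  swap i (swap i.+1 (swap i k)) = swap i.+1 (swap i (swap i.+1 k)).
Proof. by rewrite /swap; case_nat_eqs; lia. Qed.

Definition gen_act (g : gen) (x : nat * bool) : nat * bool :=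
  match g with
  | Sig i | Rho i => (swap i x.1, x.2)
  | Gam j => (x.1, (x.1 == j) (+) x.2)
  end.

Definition word_act (w : word) (x : nat * bool) : nat * bool :=
  foldr (fun y => gen_act y.1) x w.

Definition twist (w : word) (k : nat) : bool := (word_act w (k, false)).2.

Lemma gen_actK g : involutive (gen_act g).
Proof. by case: g => i [k b] /=; rewrite ?swapK ?addKb. Qed.

Lemma word_act_cat u v : word_act (u ++ v) =1 word_act u \o word_act v.
Proof. by move=> x; rewrite /word_act foldr_cat. Qed.

Lemma word_act_map_flip u : word_act (map flip u) =1 word_act u.
Proof. by elim: u => // y u IH x; apply: (congr1 (gen_act y.1) (IH x)). Qed.

Lemma word_act_rev u : cancel (word_act u) (word_act (rev u)).
Proof.
by elim: u => // y u IH x; rewrite rev_cons -cats1 word_act_cat /= gen_actK IH.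
Qed.

Lemma word_act_winv u : cancel (word_act u) (word_act (winv u)).
Proof. by move=> x; rewrite /winv -map_rev word_act_map_flip word_act_rev. Qed.

Lemma rel_word_act n l r : Defs.rel n l r -> word_act l =1 word_act r.
Proof.
move=> H [k b]; case: H => /= [i _ _|i j _ _ ij|i _|i j _ _ ij|i _ _|i j _ _ ij
  |i _ _|j _|i j _ _|i j _ _ ji jSi|i j _ _ ji jSi|i _|i _].
all: rewrite ?swapK ?swap_braid ?swap_eq ?swap_l ?swap_r ?addKb //.
- by rewrite swap_comm.
- by rewrite swap_comm.
- by rewrite swap_comm.
- by rewrite addbCA.
- by rewrite (swap_id ji jSi).
- by rewrite (swap_id ji jSi).
- by rewrite addbCA !addKb.
Qed.

Lemma tvb_eq_word_act n w1 w2 : tvb_eq n w1 w2 -> word_act w1 =1 word_act w2.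
Proof.
elim=> [w|w1' w2' _ IH|w1' w2' w3' _ IH12 _ IH23|u v [g f]|u v l r /rel_word_act lr]
  x //.
- by rewrite IH12 IH23.
- by rewrite !word_act_cat /= gen_actK.
- by rewrite !word_act_cat /= !word_act_cat /= lr.
Qed.

Lemma phiP_cat u v : phiP (u ++ v) =1 phiP u \o phiP v.
Proof. by move=> k; rewrite /phiP foldr_cat; elim: u => //= y u ->. Qed.

Lemma word_actE w k b : word_act w (k, b) = (phiP w k, b (+) twist w k).
Proof.
rewrite /twist; elim: w b => [|[g f] w IH] b /=; first by rewrite addbF.
by rewrite IH [in RHS]IH; case: g => i //=; rewrite addbCA.
Qed.

Lemma tvb_eq_phiP n w1 w2 : tvb_eq n w1 w2 -> phiP w1 =1 phiP w2.
Proof.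
by move=> /tvb_eq_word_act E k; have := E (k, false); rewrite !word_actE => -[].
Qed.

Lemma tvb_eq_twist n w1 w2 : tvb_eq n w1 w2 -> twist w1 =1 twist w2.
Proof. by move=> /tvb_eq_word_act E k; rewrite /twist E. Qed.

Lemma twist_cat u v k : twist (u ++ v) k = twist v k (+) twist u (phiP v k).
Proof. by rewrite {1}/twist word_act_cat /= !word_actE addFb. Qed.

Lemma twist_catTVP u v k :
  phiP v =1 id -> twist (u ++ v) k = twist v k (+) twist u k.
Proof. by move=> pv; rewrite twist_cat pv. Qed.

Lemma phiP_winv u : phiP u =1 id -> phiP (winv u) =1 id.
Proof.
by move=> pu k; have := word_act_winv u (k, false); rewrite !word_actE pu => -[].
Qed.

Lemma twist_winv u : phiP u =1 id -> twist (winv u) =1 twist u.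
Proof.
move=> pu k; have := word_act_winv u (k, false); rewrite !word_actE pu => -[_].
by case: (twist u k); case: (twist (winv u) k).
Qed.

Lemma phiP_gam a : all is_gam a -> phiP a =1 id.
Proof. by elim: a => // [[[] i f] a IH] //= /IH ->. Qed.

Lemma word_act_lam k l : word_act (lam k l) =1 id.
Proof.
suff conj_id R m : word_act m =1 id -> word_act (R ++ m ++ rev R) =1 id.
  by rewrite /lam; case: ifP => _; apply: conj_id => -[x b] /=; rewrite !swapK.
move=> mid x; rewrite !word_act_cat /= !word_act_cat /= mid.
by rewrite -{1}(revK R) word_act_rev.
Qed.

Definition gam_word (L : seq nat) (c : nat -> bool) : word :=
  [seq P (Gam m) | m <- L & c m].

Lemma gam_word_cons m L c :
  gam_word (m :: L) c = if c m then P (Gam m) :: gam_word L c else gam_word L c.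
Proof. by rewrite /gam_word /=; case: (c m). Qed.

Lemma all_gam_word L c : all is_gam (gam_word L c).
Proof. by rewrite /gam_word all_map; apply/allP. Qed.

Lemma eq_gam_word L c1 c2 : {in L, c1 =1 c2} -> gam_word L c1 = gam_word L c2.
Proof. by move=> c12; rewrite /gam_word (eq_in_filter c12). Qed.

Lemma twist_gam_word L c k : uniq L -> twist (gam_word L c) k = (k \in L) && c k.
Proof.
elim: L => //= m L IH /andP[mL uL]; rewrite gam_word_cons in_cons.
case cm: (c m); last by rewrite IH //; case: eqP => // ->; rewrite cm andbF.
rewrite (twist_cat [:: _]) phiP_gam ?all_gam_word // IH // /twist /=.
by case: eqVneq => [->|_]; rewrite ?(negPf mL) ?cm ?addbF.
Qed.

Lemma valid_cat n u v : valid n (u ++ v) = valid n u && valid n v.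
Proof. exact: all_cat. Qed.

Lemma valid_winv n u : valid n (winv u) = valid n u.
Proof. by rewrite /valid /winv all_rev all_map. Qed.

Lemma in_TVP_cat n u v : in_TVP n u -> in_TVP n v -> in_TVP n (u ++ v).
Proof.
by move=> [vu pu] [vv pv]; split=> [|k]; rewrite ?valid_cat ?vu // phiP_cat /= pv.
Qed.

Lemma in_TVP_winv n u : in_TVP n u -> in_TVP n (winv u).
Proof. by move=> [vu pu]; split; [rewrite valid_winv | apply: phiP_winv]. Qed.

Definition psiP (n : nat) (w : word) : word := gam_word (iota 1 n) (twist w).

Definition in_PL (n : nat) (w : word) : Prop :=
  in_TVP n w /\ tvb_eq n (psiP n w) [::].

Section Psi.

Variable n : nat.

Lemma tvb_eq_catlr u v w1 w2 :
  tvb_eq n w1 w2 -> tvb_eq n (u ++ w1 ++ v) (u ++ w2 ++ v).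
Proof.
elim=> [w|w1' w2' _ IH|w1' w2' w3' _ IH12 _ IH23|u' v' x|u' v' l r lr].
- exact: te_refl.
- exact: te_sym.
- exact: te_trans IH12 IH23.
- by move: (te_free n (u ++ u') (v' ++ v) x); rewrite -!catA.
- by move: (te_rel (u ++ u') (v' ++ v) lr); rewrite -!catA.
Qed.

Lemma tvb_eq_cons x w1 w2 : tvb_eq n w1 w2 -> tvb_eq n (x :: w1) (x :: w2).
Proof. by move/(tvb_eq_catlr [:: x] [::]); rewrite !cats0. Qed.

Lemma tvb_eq_catl u w1 w2 : tvb_eq n w1 w2 -> tvb_eq n (u ++ w1) (u ++ w2).
Proof. by move/(tvb_eq_catlr u [::]); rewrite !cats0. Qed.

Lemma tvb_eq_winv_cat u : tvb_eq n (winv u ++ u) [::].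
Proof.
elim: u => [|x u IH]; first exact: te_refl.
rewrite /winv /= rev_cons -cats1 -catA /=; apply: te_trans IH.
by have := te_free n (rev (map flip u)) u (flip x); case: x => g [].
Qed.

Lemma tvb_eq_gamV j f a :
  0 < j <= n -> tvb_eq n ((Gam j, f) :: a) (P (Gam j) :: a).
Proof.
move=> hj; case: f; last exact: te_refl.
apply: te_trans (te_free n [::] (P (Gam j) :: a) (Inv (Gam j))).
exact/te_sym/(te_rel [:: Inv (Gam j)] a (r_gsq hj)).
Qed.

Lemma tvb_eq_cons_gam_word L c j :
  uniq L -> all (fun m => 0 < m <= n) L -> j \in L ->
  tvb_eq n (P (Gam j) :: gam_word L c) (gam_word L (fun k => (k == j) (+) c k)).
Proof.
elim: L => //= m L IH /andP[mL uL] /andP[hm hL]; rewrite in_cons !gam_word_cons.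
case: eqVneq => [->|jm] /= => [_|jL].
  have -> : gam_word L (fun k => (k == m) (+) c k) = gam_word L c.
    by apply: eq_gam_word => k kL /=; case: eqP kL mL => // ->->.
  case: (c m); last exact: te_refl.
  exact: (te_rel [::] _ (r_gsq hm)).
case: (c m); last exact: IH.
apply: te_trans (tvb_eq_cons _ (IH uL hL jL)).
have hj : 0 < j <= n by move/allP: hL => /(_ j jL).
exact: (te_rel [::] _ (r_gcomm hj hm)).
Qed.

Lemma psiP_eq_nil w : {in iota 1 n, twist w =1 xpred0} -> psiP n w = [::].
Proof. by move=> tw; rewrite /psiP (eq_gam_word tw) /gam_word filter_pred0. Qed.

Lemma psiP_nil : psiP n [::] = [::].
Proof. by apply: psiP_eq_nil => k. Qed.

Lemma psiP_lam k l : psiP n (lam k l) = [::].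
Proof. by apply: psiP_eq_nil => j _; rewrite /twist word_act_lam. Qed.

Lemma tvb_eq_psiP_gam a : valid n a -> all is_gam a -> tvb_eq n a (psiP n a).
Proof.
elim: a => [|[[] j f] a IH] //= => [_ _|]; first by rewrite psiP_nil; exact: te_refl.
move=> /andP[hj va] ga; apply: te_trans (tvb_eq_gamV f a hj) _.
apply: te_trans (tvb_eq_cons _ (IH va ga)) _.
have -> : psiP n ((Gam j, f) :: a) =
          gam_word (iota 1 n) (fun k => (k == j) (+) twist a k).
  apply: eq_gam_word => k _.
  by rewrite (twist_cat [:: _]) (phiP_gam ga) {2}/twist /= addbF addbC.
apply: tvb_eq_cons_gam_word; first exact: iota_uniq.
  by apply/allP => m; rewrite mem_iota; lia.
by rewrite mem_iota; lia.
Qed.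

Lemma psiP_eq w1 w2 :
  {in iota 1 n, twist w1 =1 twist w2} -> psiP n w1 = psiP n w2.
Proof. exact: eq_gam_word. Qed.

Lemma psiP_tvb_eq w1 w2 : tvb_eq n w1 w2 -> psiP n w1 = psiP n w2.
Proof. by move=> /tvb_eq_twist E; apply: psiP_eq => k _. Qed.

Lemma twist_psiP w k : k \in iota 1 n -> twist (psiP n w) k = twist w k.
Proof. by move=> kn; rewrite twist_gam_word ?iota_uniq // kn. Qed.

Lemma phiP_psiP w : phiP (psiP n w) =1 id.
Proof. exact/phiP_gam/all_gam_word. Qed.

Lemma valid_psiP w : valid n (psiP n w).
Proof.
rewrite /valid all_map; apply/allP => m.
by rewrite mem_filter mem_iota /= => /and3P[_]; lia.
Qed.

Lemma psiP_in_A w : in_A n (psiP n w).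
Proof.
split; first exact: valid_psiP.
by exists (psiP n w); split; [exact: valid_psiP | exact: all_gam_word | exact: te_refl].
Qed.

Lemma psiP_idA a : in_A n a -> tvb_eq n (psiP n a) a.
Proof.
move=> [_ [b [vb gb ab]]]; rewrite (psiP_tvb_eq ab).
exact/te_sym/(te_trans ab)/tvb_eq_psiP_gam.
Qed.

Lemma in_A_TVP a : in_A n a -> in_TVP n a.
Proof. by move=> [va [b [_ gb /tvb_eq_phiP ab]]]; split=> // k; rewrite ab phiP_gam. Qed.

Lemma psiP_cat w1 w2 : phiP w2 =1 id ->
  tvb_eq n (psiP n (w1 ++ w2)) (psiP n w1 ++ psiP n w2).
Proof.
move=> p2; rewrite (@psiP_eq _ (psiP n w1 ++ psiP n w2)).
  apply/te_sym/tvb_eq_psiP_gam; first by rewrite valid_cat !valid_psiP.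
  by rewrite all_cat !all_gam_word.
by move=> k kn; rewrite !twist_catTVP ?twist_psiP //; apply: phiP_psiP.
Qed.

Lemma twist0_in_PL w : in_TVP n w -> {in iota 1 n, twist w =1 xpred0} -> in_PL n w.
Proof. by move=> Tw tw; split; rewrite ?psiP_eq_nil //; exact: te_refl. Qed.

Lemma in_PL_twist0 w : in_PL n w -> {in iota 1 n, twist w =1 xpred0}.
Proof. by move=> [_ /tvb_eq_twist pw] k kn; rewrite -twist_psiP // pw. Qed.

Lemma in_PL_conj p u : in_PL n p -> in_TVP n u -> in_PL n (winv u ++ p ++ u).
Proof.
move=> Pp Tu; have Tpu := in_TVP_cat Pp.1 Tu.
apply: twist0_in_PL => [|k kn]; first exact: in_TVP_cat (in_TVP_winv Tu) Tpu.
rewrite (twist_catTVP _ _ Tpu.2) (twist_catTVP _ _ Tu.2) (in_PL_twist0 Pp kn).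
by rewrite (twist_winv Tu.2) addbF addbb.
Qed.

Lemma in_PL_A_trivial w : in_PL n w -> in_A n w -> tvb_eq n w [::].
Proof. by move=> [_ pw] Aw; apply: te_trans (te_sym (psiP_idA Aw)) pw. Qed.

Lemma in_A_gam j : 0 < j <= n -> in_A n [:: P (Gam j)].
Proof.
move=> hj; split; first by rewrite /= hj.
by exists [:: P (Gam j)]; split; rewrite //= ?hj //; exact: te_refl.
Qed.

Lemma in_TVP_decomposition w : in_TVP n w ->
  exists p a, [/\ in_PL n p, in_A n a & tvb_eq n w (p ++ a)].
Proof.
move=> Tw; have Ta := in_A_TVP (psiP_in_A w).
exists (w ++ winv (psiP n w)), (psiP n w); split.
- apply: twist0_in_PL => [|k kn]; first exact: in_TVP_cat Tw (in_TVP_winv Ta).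
  by rewrite (twist_catTVP _ _ (phiP_winv Ta.2)) (twist_winv Ta.2) twist_psiP ?addbb.
- exact: psiP_in_A.
- rewrite -catA; apply: te_sym.
  by move: (tvb_eq_catl w (tvb_eq_winv_cat (psiP n w))); rewrite cats0.
Qed.

End Psi.

Theorem mainTheorem5 (n : nat) (hn : 2 <= n) :
  exists psi : word -> word,
    (forall w, in_TVP n w -> in_A n (psi w)) /\
    (forall w1 w2, in_TVP n w1 -> in_TVP n w2 -> tvb_eq n w1 w2 ->
       tvb_eq n (psi w1) (psi w2)) /\
    (forall w1 w2, in_TVP n w1 -> in_TVP n w2 ->
       tvb_eq n (psi (w1 ++ w2)) (psi w1 ++ psi w2)) /\
    (forall k l, 0 < k <= n -> 0 < l <= n -> k != l ->
       tvb_eq n (psi (lam k l)) [::]) /\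
    (forall j, 0 < j <= n -> tvb_eq n (psi [:: P (Gam j)]) [:: P (Gam j)]) /\
    (forall a, in_A n a -> tvb_eq n (psi a) a) /\
    (forall a, in_A n a -> exists w, in_TVP n w /\ tvb_eq n (psi w) a) /\
    (let PL := fun w => in_TVP n w /\ tvb_eq n (psi w) [::] in
       (forall p u, PL p -> in_TVP n u -> PL (winv u ++ p ++ u)) /\
       (forall w, PL w -> in_A n w -> tvb_eq n w [::]) /\
       (forall w, in_TVP n w ->
          exists p a, [/\ PL p, in_A n a & tvb_eq n w (p ++ a)])).
Proof.
exists (psiP n); split; first by move=> w _; exact: psiP_in_A.
split; first by move=> w1 w2 _ _ /psiP_tvb_eq ->; exact: te_refl.
split; first by move=> w1 w2 _ [_ p2]; exact: psiP_cat.
split; first by move=> k l _ _ _; rewrite psiP_lam; exact: te_refl.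
split; first by move=> j /in_A_gam /psiP_idA.
split; first exact: psiP_idA.
split; first by move=> a Aa; exists a; split; [exact: in_A_TVP | exact: psiP_idA].
split; first exact: in_PL_conj.
by split; [exact: in_PL_A_trivial | exact: in_TVP_decomposition].
Qed.
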